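(* Let $(\mathbb{X},\dagger)$ be a Moore-Penrose dagger additive category. If $\begin{bmatrix}\alpha&\beta\\ \beta^\dagger&\delta\end{bmatrix}:B\oplus C\to B\oplus C$ is $\dagger$-positive, then $m=\beta^\dagger\circ\alpha^\circ$ is a conditional generator of it, where $\alpha^\circ$ is the Moore-Penrose inverse of $\alpha$.
   Context: A dagger additive category is a dagger category (contravariant identity-on-objects involutive functor $\dagger$) whose hom-sets are abelian groups with bilinear composition and additive $\dagger$, having a zero object and finite biproducts whose projections $\pi_j$ and injections $\iota_j$ satisfy $\pi_j^\dagger=\iota_j$. Maps between biproducts are written as matrices; composition is matrix multiplication and $\dagger$ is transpose with entrywise $\dagger$. An endomorphism $p$ is $\dagger$-positive if $p=\phi^\dagger\circ\phi$ for some map $\phi$. A Moore-Penrose inverse of $f:A\to B$ is a map $f^\circ:B\to A$ with $f f^\circ f=f$, $f^\circ f f^\circ=f^\circ$, $(f f^\circ)^\dagger=f f^\circ$, $(f^\circ f)^\dagger=f^\circ f$ (it is unique when it exists); a Moore-Penrose dagger additive category is one in which every map has a Moore-Penrose inverse. A conditional generator for a $\dagger$-positive map $\begin{bmatrix}\alpha&\beta\\ \beta^\dagger&\delta\end{bmatrix}:B\oplus C\to B\oplus C$ (with $\alpha:B\to B$, $\beta:C\to B$, $\delta:C\to C$) is a map $m:B\to C$ with (i) $m\circ\alpha=\beta^\dagger$ and (ii) $\delta-m\circ\beta$ is $\dagger$-positive. *)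

From HB Require Import structures.
From mathcomp Require Import all_boot all_algebra.
Set Implicit Arguments. Unset Strict Implicit. Unset Printing Implicit Defensive.
Import GRing.Theory.
Local Open Scope ring_scope.

Record DagAddCat := {
  Ob : Type;
  Mor : Ob -> Ob -> zmodType;
  cmp : forall A B C : Ob, Mor B C -> Mor A B -> Mor A C;
  idm : forall A : Ob, Mor A A;
  dag : forall A B : Ob, Mor A B -> Mor B A;
  compA : forall A B C D (h : Mor C D) (g : Mor B C) (f : Mor A B),
      cmp h (cmp g f) = cmp (cmp h g) f;
  comp1m : forall A B (f : Mor A B), cmp (idm B) f = f;
  compm1 : forall A B (f : Mor A B), cmp f (idm A) = f;
  compDl : forall A B C (g1 g2 : Mor B C) (f : Mor A B),
      cmp (g1 + g2) f = cmp g1 f + cmp g2 f;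
  compDr : forall A B C (g : Mor B C) (f1 f2 : Mor A B),
      cmp g (f1 + f2) = cmp g f1 + cmp g f2;
  dag_id : forall A, dag (idm A) = idm A;
  dag_comp : forall A B C (g : Mor B C) (f : Mor A B),
      dag (cmp g f) = cmp (dag f) (dag g);
  dagK : forall A B (f : Mor A B), dag (dag f) = f;
  dagD : forall A B (f g : Mor A B), dag (f + g) = dag f + dag g;
  zob : Ob;
  zob_init : forall A (f : Mor zob A), f = 0;
  zob_term : forall A (f : Mor A zob), f = 0;
  bip : Ob -> Ob -> Ob;
  pi1 : forall A B, Mor (bip A B) A;
  pi2 : forall A B, Mor (bip A B) B;
  io1 : forall A B, Mor A (bip A B);
  io2 : forall A B, Mor B (bip A B);
  pi1io1 : forall A B, cmp (pi1 A B) (io1 A B) = idm A;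
  pi2io2 : forall A B, cmp (pi2 A B) (io2 A B) = idm B;
  pi1io2 : forall A B, cmp (pi1 A B) (io2 A B) = 0;
  pi2io1 : forall A B, cmp (pi2 A B) (io1 A B) = 0;
  io_pi : forall A B,
      cmp (io1 A B) (pi1 A B) + cmp (io2 A B) (pi2 A B) = idm (bip A B);
  dag_pi1 : forall A B, dag (pi1 A B) = io1 A B;
  dag_pi2 : forall A B, dag (pi2 A B) = io2 A B
}.

Arguments Mor : clear implicits.
Arguments cmp {d A B C}.
Arguments dag {d A B}.
Arguments idm {d}.
Arguments bip {d}.
Arguments pi1 {d}. Arguments pi2 {d}. Arguments io1 {d}. Arguments io2 {d}.

Section Defs.
Variable X : DagAddCat.

(* The 2x2 matrix [[a, b], [c, e]] : A (+) B -> C (+) D, i.e.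
   io1 a pi1 + io1 b pi2 + io2 c pi1 + io2 e pi2. *)
Definition mx2 (A B C D : Ob X) (a : Mor X A C) (b : Mor X B C)
    (c : Mor X A D) (e : Mor X B D) : Mor X (bip A B) (bip C D) :=
  cmp (io1 C D) (cmp a (pi1 A B)) + cmp (io1 C D) (cmp b (pi2 A B))
  + cmp (io2 C D) (cmp c (pi1 A B)) + cmp (io2 C D) (cmp e (pi2 A B)).

Definition dag_positive (A : Ob X) (p : Mor X A A) : Prop :=
  exists (Y : Ob X) (phi : Mor X A Y), p = cmp (dag phi) phi.

Definition is_MP_inverse (A B : Ob X) (f : Mor X A B) (g : Mor X B A) : Prop :=
  [/\ cmp f (cmp g f) = f,
      cmp g (cmp f g) = g,
      dag (cmp f g) = cmp f g
    & dag (cmp g f) = cmp g f].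

Definition MP_category : Prop :=
  forall (A B : Ob X) (f : Mor X A B), exists g : Mor X B A, is_MP_inverse f g.

Definition conditional_generator (B C : Ob X) (alpha : Mor X B B)
    (beta : Mor X C B) (delta : Mor X C C) (m : Mor X B C) : Prop :=
  cmp m alpha = dag beta /\ dag_positive (delta - cmp m beta).

End Defs.

(* Write the positive matrix as a Gram matrix, phi^dagger phi, and let p1, p2 be
   the two columns of phi, so that alpha = p1^dagger p1, beta = p1^dagger p2 and
   delta = p2^dagger p2.  In a Moore-Penrose category psi^dagger psi = 0 forces
   psi = 0; applied to psi = p1 (alpha^o alpha - 1) this gives
   p1 alpha^o alpha = p1, whence m alpha = beta^dagger.  The Schur complement
   delta - m beta is then the Gram map of p2 - p1 m^dagger. *)
From Pilot Require Import Defs.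
From mathcomp Require Import all_boot all_algebra.
Set Implicit Arguments. Unset Strict Implicit. Unset Printing Implicit Defensive.
Import GRing.Theory.
Local Open Scope ring_scope.

Section AdditiveMaps.
Variables (U V : zmodType) (f : U -> V).
Hypothesis fD : {morph f : x y / x + y}.

Lemma additive0 : f 0 = 0.
Proof. by apply: (addrI (f 0)); rewrite -fD !addr0. Qed.

Lemma additiveB x y : f (x - y) = f x - f y.
Proof.
have fN z : f (- z) = - f z.
  by apply: (addrI (f z)); rewrite -fD !subrr additive0.
by rewrite fD fN.
Qed.

End AdditiveMaps.

Section DaggerAdditive.
Variable X : DagAddCat.
Implicit Types A B C D Y : Ob X.

Lemma cmp0r A B C (g : Mor X B C) : cmp g (0 : Mor X A B) = 0.
Proof. exact: (additive0 (f := cmp g) (compDr g)). Qed.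

Lemma cmp0l A B C (f : Mor X A B) : cmp (0 : Mor X B C) f = 0.
Proof. exact: (additive0 (f := cmp^~ f) (fun g1 g2 => compDl g1 g2 f)). Qed.

Lemma cmpBr A B C (g : Mor X B C) (f1 f2 : Mor X A B) :
  cmp g (f1 - f2) = cmp g f1 - cmp g f2.
Proof. exact: (additiveB (f := cmp g) (compDr g)). Qed.

Lemma cmpBl A B C (g1 g2 : Mor X B C) (f : Mor X A B) :
  cmp (g1 - g2) f = cmp g1 f - cmp g2 f.
Proof. exact: (additiveB (f := cmp^~ f) (fun g1 g2 => compDl g1 g2 f)). Qed.

Lemma dagB A B (f g : Mor X A B) : dag (f - g) = dag f - dag g.
Proof. exact: (additiveB (f := dag) (@dagD X A B)). Qed.

Lemma dag_io1 A B : dag (io1 A B) = pi1 A B.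
Proof. by rewrite -dag_pi1 dagK. Qed.

Lemma dag_io2 A B : dag (io2 A B) = pi2 A B.
Proof. by rewrite -dag_pi2 dagK. Qed.

Lemma mx2_entries A B C D (a : Mor X A C) (b : Mor X B C)
    (c : Mor X A D) (e : Mor X B D) :
  [/\ cmp (pi1 C D) (cmp (mx2 a b c e) (io1 A B)) = a,
      cmp (pi1 C D) (cmp (mx2 a b c e) (io2 A B)) = b
    & cmp (pi2 C D) (cmp (mx2 a b c e) (io2 A B)) = e].
Proof.
rewrite /mx2 !compDl !compDr !Defs.compA ?pi1io1 ?pi2io2 ?pi1io2 ?pi2io1.
by rewrite !comp1m !cmp0l -!Defs.compA ?pi1io1 ?pi2io2 ?pi1io2 ?pi2io1
  !compm1 !cmp0r ?addr0 ?add0r.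
Qed.

Lemma mx2_gram A B Y (a : Mor X A A) (b : Mor X B A) (c : Mor X A B)
    (e : Mor X B B) (phi : Mor X (bip A B) Y) :
  mx2 a b c e = cmp (dag phi) phi ->
  [/\ a = cmp (dag (cmp phi (io1 A B))) (cmp phi (io1 A B)),
      b = cmp (dag (cmp phi (io1 A B))) (cmp phi (io2 A B))
    & e = cmp (dag (cmp phi (io2 A B))) (cmp phi (io2 A B))].
Proof.
have [a_11 b_12 e_22] := mx2_entries a b c e; move=> gram_phi.
rewrite gram_phi in a_11 b_12 e_22; rewrite -a_11 -b_12 -e_22.
by rewrite !dag_comp dag_io1 dag_io2 !Defs.compA.
Qed.

(* An MP inverse g of psi gives psi = (psi g)^dagger psi = g^dagger (psi^dagger psi). *)
Lemma gram_eq0 A Y (psi : Mor X A Y) (g : Mor X Y A) :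
  is_MP_inverse psi g -> cmp (dag psi) psi = 0 -> psi = 0.
Proof.
case=> psi_g_psi _ psi_g_sym _ gram0.
by rewrite -psi_g_psi Defs.compA -psi_g_sym dag_comp -Defs.compA gram0 cmp0r.
Qed.

Lemma gram_MP_inverseK (HMP : MP_category X) A Y (p : Mor X A Y)
    (ao : Mor X A A) :
  is_MP_inverse (cmp (dag p) p) ao -> cmp p (cmp ao (cmp (dag p) p)) = p.
Proof.
case=> a_ao_a _ _ ao_a_sym; apply/eqP; rewrite -subr_eq0; apply/eqP.
set psi := _ - p; have [g MPg] := HMP _ _ psi; apply: (gram_eq0 MPg).
have -> : psi = cmp p (cmp ao (cmp (dag p) p) - idm A) by rewrite cmpBr compm1.
rewrite dag_comp -Defs.compA (Defs.compA (dag p)) dagB ao_a_sym dag_id.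
by rewrite cmpBr compm1 a_ao_a subrr cmp0r.
Qed.

Lemma schur_complement_gram B C Y (p1 : Mor X B Y) (p2 : Mor X C Y)
    (m : Mor X B C) :
  cmp m (cmp (dag p1) p1) = cmp (dag p2) p1 ->
  cmp (dag p2) p2 - cmp m (cmp (dag p1) p2)
    = cmp (dag (p2 - cmp p1 (dag m))) (p2 - cmp p1 (dag m)).
Proof.
rewrite Defs.compA => m_gram.
rewrite dagB dag_comp dagK !cmpBl !cmpBr !Defs.compA m_gram.
by rewrite opprB addrA subrK.
Qed.

End DaggerAdditive.

Theorem mainTheorem10 (X : DagAddCat) (HMP : MP_category X)
    (B C : Ob X) (alpha : Mor X B B) (beta : Mor X C B) (delta : Mor X C C)
    (alpha_o : Mor X B B) (Halpha_o : is_MP_inverse alpha alpha_o) :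
  dag_positive (mx2 alpha beta (dag beta) delta) ->
  conditional_generator alpha beta delta (cmp (dag beta) alpha_o).
Proof.
case=> Y [phi /mx2_gram[Ea Eb Ed]]; subst alpha beta delta.
set p1 := cmp phi (io1 B C); set p2 := cmp phi (io2 B C).
set m := cmp (dag _) alpha_o.
have m_gram : cmp m (cmp (dag p1) p1) = dag (cmp (dag p1) p2).
  by rewrite -Defs.compA dag_comp dagK -Defs.compA gram_MP_inverseK.
split=> //; exists Y, (p2 - cmp p1 (dag m)).
by apply: schur_complement_gram; rewrite m_gram dag_comp dagK.
Qed.
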